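(* Let $2s$ be a positive integer and let $f_0,f_1,\dots,f_{2s}$ be the Veronese sequence (defined in the context). Then for all $0\le k\le 2s$, $0\le j\le 2s$ and all $\xi_+\in\mathbb{C}\setminus\{0\}$, $$(f_k)_j=\frac{(2s)!}{(2s-k)!}\left(\frac{-\xi_-}{1+\xi_+\xi_-}\right)^k\sqrt{\binom{2s}{j}}\,\xi_+^j\,K_j(k;p,2s),$$ and the rank-1 Hermitian projectors $P_k=\frac{f_k f_k^\dagger}{f_k^\dagger f_k}$ have entries $$(P_k)_{ij}=\binom{2s}{k}\frac{(\xi_+\xi_-)^k}{(1+\xi_+\xi_-)^{2s}}\,\xi_+^i\xi_-^j\sqrt{\binom{2s}{i}\binom{2s}{j}}\,K_i(k;p,2s)K_j(k;p,2s),\qquad 0\le i,j\le 2s.$$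
   Context: Let $2s\in\mathbb{Z}_{>0}$. Let $\xi_+\in\mathbb{C}$, $\xi_-=\overline{\xi_+}$ (with $\xi_\pm=\xi^1\pm i\xi^2$), and set $p=\frac{\xi_+\xi_-}{1+\xi_+\xi_-}$. Let $\partial=\frac12(\partial_{\xi^1}-i\partial_{\xi^2})$ and $\bar\partial=\frac12(\partial_{\xi^1}+i\partial_{\xi^2})$. Vectors in $\mathbb{C}^{2s+1}$ have components indexed by $0,\dots,2s$. The Krawtchouk polynomials are, for integers $0\le j,k\le N$ and $0<p<1$, $K_j(k;p,N)={}_2F_1(-j,-k;-N;1/p)=\sum_{n=0}^{\min(j,k)}\frac{(-j)_n(-k)_n}{(-N)_n\,n!}p^{-n}$, where $(a)_n$ is the Pochhammer symbol; in particular $K_j(0;p,N)=1$. The Veronese sequence is defined by $(f_0)_j=\sqrt{\binom{2s}{j}}\,\xi_+^j$ for $0\le j\le 2s$, and recursively $f_{k+1}=\left(\mathbf{1}_{2s+1}-\frac{f_k f_k^\dagger}{f_k^\dagger f_k}\right)\partial f_k$ for $0\le k\le 2s-1$, where $\mathbf 1_{2s+1}$ is the identity matrix and $\dagger$ denotes conjugate transpose. *)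

From Stdlib Require Import Reals ClassicalEpsilon Arith.
Open Scope R_scope.

Record Cplx := mkC { re : R ; im : R }.

Definition Cadd (a b : Cplx) : Cplx := mkC (re a + re b) (im a + im b).
Definition Copp (a : Cplx) : Cplx := mkC (- re a) (- im a).
Definition Csub (a b : Cplx) : Cplx := Cadd a (Copp b).
Definition Cmul (a b : Cplx) : Cplx :=
  mkC (re a * re b - im a * im b) (re a * im b + im a * re b).
Definition Cconj (a : Cplx) : Cplx := mkC (re a) (- im a).
Definition Cnorm2 (a : Cplx) : R := re a * re a + im a * im a.
(* inverse; Cinv 0 = 0 by the convention of Rinv, irrelevant where used *)
Definition Cinv (a : Cplx) : Cplx := mkC (re a / Cnorm2 a) (- im a / Cnorm2 a).
Definition Cdiv (a b : Cplx) : Cplx := Cmul a (Cinv b).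
Definition RtoC (r : R) : Cplx := mkC r 0.
Definition Czero : Cplx := RtoC 0.
Definition Cone : Cplx := RtoC 1.
Definition Ci : Cplx := mkC 0 1.
Fixpoint Cpow (a : Cplx) (n : nat) : Cplx :=
  match n with O => Cone | S m => Cmul a (Cpow a m) end.

Fixpoint Csum (n : nat) (g : nat -> Cplx) : Cplx :=
  match n with O => Czero | S m => Cadd (Csum m g) (g m) end.

(* Vectors of C^{N+1}: components indexed by 0..N *)
Definition vec := nat -> Cplx.

Definition dotc (N : nat) (v w : vec) : Cplx :=
  Csum (S N) (fun j => Cmul (Cconj (v j)) (w j)).

Definition proj (N : nat) (v : vec) (i j : nat) : Cplx :=
  Cdiv (Cmul (v i) (Cconj (v j))) (dotc N v v).

(* Partial derivatives of a real function of two real variables (the value is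
   the derivative whenever it exists). *)
Definition Dx (h : R -> R -> R) (x y : R) : R :=
  epsilon (inhabits 0) (fun l => derivable_pt_lim (fun t => h t y) x l).
Definition Dy (h : R -> R -> R) (x y : R) : R :=
  epsilon (inhabits 0) (fun l => derivable_pt_lim (fun t => h x t) y l).

(* Wirtinger derivative  ∂ = (∂_{ξ^1} - i ∂_{ξ^2})/2, where ξ_+ = ξ^1 + i ξ^2.
   For g = u + i v:  ∂g = ((u_x + v_y) + i (v_x - u_y)) / 2. *)
Definition wirt (g : Cplx -> Cplx) (z : Cplx) : Cplx :=
  let u := fun a b => re (g (mkC a b)) in
  let v := fun a b => im (g (mkC a b)) in
  let x := re z in let y := im z in
  mkC ((Dx u x y + Dy v x y) / 2) ((Dx v x y - Dy u x y) / 2).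

(* Veronese sequence, as functions of ξ_+ ∈ C, with N = 2s. *)
Fixpoint veronese (N : nat) (k : nat) : Cplx -> vec :=
  match k with
  | O => fun xi j => Cmul (RtoC (sqrt (C N j))) (Cpow xi j)
  | S m =>
      let f := veronese N m in
      fun xi j =>
        Csub (wirt (fun z => f z j) xi)
             (Csum (S N) (fun l => Cmul (proj N (f xi) j l) (wirt (fun z => f z l) xi)))
  end.

Fixpoint poch (a : R) (n : nat) : R :=
  match n with O => 1 | S m => poch a m * (a + INR m) end.

Fixpoint Rsum (n : nat) (g : nat -> R) : R :=
  match n with O => 0 | S m => Rsum m g + g m end.

(* Krawtchouk polynomial K_j(k; p, N) = 2F1(-j,-k;-N;1/p) *)
Definition kraw (j k : nat) (p : R) (N : nat) : R :=
  Rsum (S (Nat.min j k)) (fun n =>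
    poch (- INR j) n * poch (- INR k) n / (poch (- INR N) n * INR (Factorial.fact n))
    * / (p ^ n)).

(* p = ξ_+ ξ_- / (1 + ξ_+ ξ_-) *)
Definition pval (xi : Cplx) : R := Cnorm2 xi / (1 + Cnorm2 xi).

From Pilot Require Import Defs.
From Stdlib Require Import Reals Arith.
From Stdlib Require Import Lia Lra Field FunctionalExtensionality ClassicalEpsilon.
Open Scope R_scope.

(* Let h = 1/(1+|z|^2), P = 1 + zX, Q = X - conj z, and let g_k be the coefficient
   vector of the polynomial P^(N-k) Q^k.  The proof establishes
       (f_k)_j = N!/(N-k)! * h^k * (g_k)_j / sqrt(C(N,j))        (fvec)
   and then expands (g_k)_j in Krawtchouk polynomials:
   1. a small calculus of Wirtinger derivatives (has_wirt), enough to
      differentiate h^k times polynomial expressions in z and conj z;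
   2. orthogonality: the g_k are orthogonal for <a,b> = sum_l conj(a_l) b_l / C(N,l),
      with <g_k,g_k> = (1+|z|^2)^N / C(N,k); by induction on N, moving a factor P or
      Q across the inner product, where its adjoint is a first-order operator;
   3. the derivative of fvec_k is fvec_(k+1) + shift_coef * fvec_k, so by
      orthogonality the projection in the recursion removes exactly the second
      term, and f_k = fvec_k for every k (veronese_fvec);
   4. (g_k)_j = (-conj z)^k z^j C(N,j) K_j(k;p,N), by a Pascal-rule induction on N
      against the hypergeometric sum defining K_j (gpoly_kraw);
   5. the theorem follows by substitution; the projector formula uses the norm
      |f_k|^2 computed in step 2. *)

Lemma Cplx_ext : forall a b : Cplx, re a = re b -> im a = im b -> a = b.
Proof. intros [a1 a2] [b1 b2]; simpl; intros; subst; reflexivity. Qed.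

Lemma Cring_theory : ring_theory Czero Cone Cadd Cmul Csub Copp (@eq Cplx).
Proof.
  constructor; intros; apply Cplx_ext; unfold Cadd, Cmul, Csub, Copp, Czero, Cone, RtoC; simpl; ring.
Qed.

Add Ring Cring : Cring_theory.

Lemma Cinv_l : forall p, p <> Czero -> Cmul (Cinv p) p = Cone.
Proof.
  intros [x y] H. assert (Hn : x * x + y * y <> 0).
  { intro E. apply H. assert (x = 0) by nra. assert (y = 0) by nra. subst. reflexivity. }
  apply Cplx_ext; unfold Cinv, Cnorm2, Cmul, Cone, RtoC; simpl; field; auto.
Qed.

Lemma Cfield_theory : field_theory Czero Cone Cadd Cmul Csub Copp Cdiv Cinv (@eq Cplx).
Proof.
  constructor.
  - exact Cring_theory.
  - intro E. injection E. lra.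
  - reflexivity.
  - exact Cinv_l.
Qed.

Add Field Cfield : Cfield_theory.

Lemma RtoC_add a b : RtoC (a + b) = Cadd (RtoC a) (RtoC b).
Proof. apply Cplx_ext; simpl; ring. Qed.

Lemma RtoC_mul a b : RtoC (a * b) = Cmul (RtoC a) (RtoC b).
Proof. apply Cplx_ext; simpl; ring. Qed.

Lemma RtoC_sub a b : RtoC (a - b) = Csub (RtoC a) (RtoC b).
Proof. apply Cplx_ext; simpl; ring. Qed.

Lemma RtoC_opp a : RtoC (- a) = Copp (RtoC a).
Proof. apply Cplx_ext; simpl; ring. Qed.

Lemma RtoC_inv a : RtoC (/ a) = Cinv (RtoC a).
Proof.
  destruct (Req_dec a 0) as [->|H].
  - apply Cplx_ext; unfold Cinv, Cnorm2; simpl; rewrite ?Rinv_0; unfold Rdiv; ring_simplify; try rewrite Rinv_0; ring.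
  - apply Cplx_ext; unfold Cinv, Cnorm2; simpl; field; auto.
Qed.

Lemma RtoC_div a b : RtoC (a / b) = Cdiv (RtoC a) (RtoC b).
Proof. unfold Rdiv, Cdiv. rewrite RtoC_mul, RtoC_inv. reflexivity. Qed.

Lemma RtoC_pow a n : RtoC (a ^ n) = Cpow (RtoC a) n.
Proof. induction n; simpl. reflexivity. rewrite RtoC_mul, IHn; reflexivity. Qed.

Lemma RtoC_neq a : a <> 0 -> RtoC a <> Czero.
Proof. intros H E. injection E; auto. Qed.

Lemma RtoC_0 : RtoC 0 = Czero. Proof. reflexivity. Qed.

Lemma RtoC_1 : RtoC 1 = Cone. Proof. reflexivity. Qed.

Lemma Cpow_add a m n : Cpow a (m + n) = Cmul (Cpow a m) (Cpow a n).
Proof. induction m; simpl. ring. rewrite IHm; ring. Qed.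

Lemma Cpow_mul a b n : Cpow (Cmul a b) n = Cmul (Cpow a n) (Cpow b n).
Proof. induction n; simpl. ring. rewrite IHn; ring. Qed.

Lemma Cpow_one n : Cpow Cone n = Cone.
Proof. induction n; simpl. reflexivity. rewrite IHn. ring. Qed.

Lemma Cconj_add a b : Cconj (Cadd a b) = Cadd (Cconj a) (Cconj b).
Proof. apply Cplx_ext; simpl; ring. Qed.

Lemma Cconj_mul a b : Cconj (Cmul a b) = Cmul (Cconj a) (Cconj b).
Proof. apply Cplx_ext; simpl; ring. Qed.

Lemma Cconj_opp a : Cconj (Copp a) = Copp (Cconj a).
Proof. apply Cplx_ext; simpl; ring. Qed.

Lemma Cconj_RtoC a : Cconj (RtoC a) = RtoC a.
Proof. apply Cplx_ext; simpl; ring. Qed.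

Lemma Cconj_pow a n : Cconj (Cpow a n) = Cpow (Cconj a) n.
Proof. induction n; simpl. apply Cplx_ext; simpl; ring. rewrite Cconj_mul, IHn; reflexivity. Qed.

Lemma Cconj_conj a : Cconj (Cconj a) = a.
Proof. apply Cplx_ext; simpl; ring. Qed.

Lemma Cconj_0 : Cconj Czero = Czero. Proof. apply Cplx_ext; simpl; ring. Qed.

Lemma Cmul_conj_norm2 a : Cmul a (Cconj a) = RtoC (Cnorm2 a).
Proof. apply Cplx_ext; unfold Cnorm2; simpl; ring. Qed.

Lemma one_plus_Cnorm2 z : Cadd Cone (Cmul z (Cconj z)) = RtoC (1 + Cnorm2 z).
Proof. rewrite Cmul_conj_norm2, RtoC_add. reflexivity. Qed.

Lemma Cnorm2_pos z : z <> Czero -> 0 < Cnorm2 z.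
Proof.
  intro H. destruct z as [x y]. unfold Cnorm2; simpl.
  destruct (Req_dec x 0); destruct (Req_dec y 0); try nra. subst. exfalso; apply H; reflexivity.
Qed.

Lemma Csum_ext n f g : (forall l, (l < n)%nat -> f l = g l) -> Csum n f = Csum n g.
Proof. induction n; intros H; simpl. reflexivity. rewrite IHn, H; auto. Qed.

Lemma Csum_scal n a f : Csum n (fun l => Cmul a (f l)) = Cmul a (Csum n f).
Proof. induction n; simpl. apply Cplx_ext; simpl; ring. rewrite IHn; ring. Qed.

Lemma Csum_add n f g : Csum n (fun l => Cadd (f l) (g l)) = Cadd (Csum n f) (Csum n g).
Proof. induction n; simpl. apply Cplx_ext; simpl; ring. rewrite IHn; ring. Qed.

Lemma Csum_conj n f : Cconj (Csum n f) = Csum n (fun l => Cconj (f l)).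
Proof. induction n; simpl. apply Cconj_0. rewrite Cconj_add, IHn; reflexivity. Qed.

Lemma Csum_shift n f : Csum (S n) f = Cadd (f O) (Csum n (fun l => f (S l))).
Proof. induction n; simpl. ring. simpl in IHn. rewrite IHn. ring. Qed.

Lemma dotc_lin N v w1 w2 b :
  dotc N v (fun j => Cadd (w1 j) (Cmul b (w2 j))) = Cadd (dotc N v w1) (Cmul b (dotc N v w2)).
Proof.
  unfold dotc. rewrite <- Csum_scal, <- Csum_add. apply Csum_ext. intros; ring.
Qed.

Lemma dotc_ext N v w v' w' : (forall j, (j <= N)%nat -> v j = v' j) -> (forall j, (j <= N)%nat -> w j = w' j) ->
  dotc N v w = dotc N v' w'.
Proof. intros H1 H2. unfold dotc. apply Csum_ext. intros l Hl. rewrite H1, H2 by lia. reflexivity. Qed.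

Lemma proj_ext N v v' i j : (forall l, (l <= N)%nat -> v l = v' l) -> (i <= N)%nat -> (j <= N)%nat ->
  proj N v i j = proj N v' i j.
Proof.
  intros H Hi Hj. unfold proj. rewrite (dotc_ext N v v v' v') by auto. rewrite !H by auto. reflexivity.
Qed.

Lemma derivable_pt_lim_ext f g x l l' : (forall t, f t = g t) -> l = l' -> derivable_pt_lim f x l -> derivable_pt_lim g x l'.
Proof. intros H1 H2 H. replace g with f by (extensionality t; auto). subst; exact H. Qed.

Definition has_partials (g : Cplx -> Cplx) (z gx gy : Cplx) : Prop :=
  derivable_pt_lim (fun t => re (g (mkC t (im z)))) (re z) (re gx) /\
  derivable_pt_lim (fun t => im (g (mkC t (im z)))) (re z) (im gx) /\
  derivable_pt_lim (fun t => re (g (mkC (re z) t))) (im z) (re gy) /\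
  derivable_pt_lim (fun t => im (g (mkC (re z) t))) (im z) (im gy).

(* g has Wirtinger derivative d at z: its partials are d + db and i (d - db) for some db,
   i.e. d = (gx - i gy)/2 and db is the conjugate derivative (gx + i gy)/2. *)
Definition has_wirt (g : Cplx -> Cplx) (z d : Cplx) : Prop :=
  exists db, has_partials g z (Cadd d db) (Cmul Ci (Csub d db)).

Lemma Dx_val (h : R -> R -> R) (x y l : R) : derivable_pt_lim (fun t => h t y) x l -> Defs.Dx h x y = l.
Proof.
  intro H. unfold Defs.Dx. apply (uniqueness_limite (fun t => h t y) x).
  apply epsilon_spec. exists l; exact H. exact H.
Qed.

Lemma Dy_val (h : R -> R -> R) (x y l : R) : derivable_pt_lim (fun t => h x t) y l -> Defs.Dy h x y = l.
Proof.
  intro H. unfold Defs.Dy. apply (uniqueness_limite (fun t => h x t) y).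
  apply epsilon_spec. exists l; exact H. exact H.
Qed.

Lemma wirt_val g z d : has_wirt g z d -> wirt g z = d.
Proof.
  intros [db [H1 [H2 [H3 H4]]]]. unfold wirt.
  rewrite (Dx_val (fun a b => re (g (mkC a b))) _ _ _ H1).
  rewrite (Dx_val (fun a b => im (g (mkC a b))) _ _ _ H2).
  rewrite (Dy_val (fun a b => re (g (mkC a b))) _ _ _ H3).
  rewrite (Dy_val (fun a b => im (g (mkC a b))) _ _ _ H4).
  apply Cplx_ext; simpl; field.
Qed.

Lemma wirt_ext g h z : (forall w, g w = h w) -> wirt g z = wirt h z.
Proof. intro H. replace h with g by (extensionality w; auto). reflexivity. Qed.

Lemma has_wirt_ext g h z d d' : (forall w, g w = h w) -> d = d' -> has_wirt g z d -> has_wirt h z d'.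
Proof. intros H1 H2 H. replace h with g by (extensionality w; auto). subst; exact H. Qed.

Lemma has_wirt_const c z : has_wirt (fun _ => c) z Czero.
Proof.
  exists Czero. repeat split; simpl;
  (eapply derivable_pt_lim_ext; [intro t; reflexivity | | apply derivable_pt_lim_const]; ring).
Qed.

Lemma has_wirt_id z : has_wirt (fun w => w) z Cone.
Proof.
  exists Czero. repeat split; simpl.
  - eapply derivable_pt_lim_ext; [intro t; reflexivity | | apply derivable_pt_lim_id]; ring.
  - eapply derivable_pt_lim_ext; [intro t; reflexivity | | apply derivable_pt_lim_const]; ring.
  - eapply derivable_pt_lim_ext; [intro t; reflexivity | | apply derivable_pt_lim_const]; ring.
  - eapply derivable_pt_lim_ext; [intro t; reflexivity | | apply derivable_pt_lim_id]; ring.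
Qed.

Lemma has_wirt_conj z : has_wirt Cconj z Czero.
Proof.
  exists Cone. repeat split; simpl.
  - eapply derivable_pt_lim_ext; [intro t; reflexivity | | apply derivable_pt_lim_id]; ring.
  - eapply derivable_pt_lim_ext; [intro t; reflexivity | | apply derivable_pt_lim_const]; ring.
  - eapply derivable_pt_lim_ext; [intro t; reflexivity | | apply derivable_pt_lim_const]; ring.
  - eapply derivable_pt_lim_ext; [intro t; reflexivity | | apply derivable_pt_lim_opp; apply derivable_pt_lim_id]; ring.
Qed.

Lemma has_wirt_add g h z dg dh : has_wirt g z dg -> has_wirt h z dh -> has_wirt (fun w => Cadd (g w) (h w)) z (Cadd dg dh).
Proof.
  intros [bg [G1 [G2 [G3 G4]]]] [bh [H1 [H2 [H3 H4]]]].
  exists (Cadd bg bh). repeat split; simpl.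
  - eapply derivable_pt_lim_ext; [intro t; reflexivity | | apply derivable_pt_lim_plus; [exact G1|exact H1]]; simpl; ring.
  - eapply derivable_pt_lim_ext; [intro t; reflexivity | | apply derivable_pt_lim_plus; [exact G2|exact H2]]; simpl; ring.
  - eapply derivable_pt_lim_ext; [intro t; reflexivity | | apply derivable_pt_lim_plus; [exact G3|exact H3]]; simpl; ring.
  - eapply derivable_pt_lim_ext; [intro t; reflexivity | | apply derivable_pt_lim_plus; [exact G4|exact H4]]; simpl; ring.
Qed.

Lemma has_wirt_opp g z dg : has_wirt g z dg -> has_wirt (fun w => Copp (g w)) z (Copp dg).
Proof.
  intros [bg [G1 [G2 [G3 G4]]]].
  exists (Copp bg). repeat split; simpl.
  - eapply derivable_pt_lim_ext; [intro t; reflexivity | | apply derivable_pt_lim_opp; exact G1]; simpl; ring.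
  - eapply derivable_pt_lim_ext; [intro t; reflexivity | | apply derivable_pt_lim_opp; exact G2]; simpl; ring.
  - eapply derivable_pt_lim_ext; [intro t; reflexivity | | apply derivable_pt_lim_opp; exact G3]; simpl; ring.
  - eapply derivable_pt_lim_ext; [intro t; reflexivity | | apply derivable_pt_lim_opp; exact G4]; simpl; ring.
Qed.

Lemma has_wirt_mul g h z dg dh : has_wirt g z dg -> has_wirt h z dh ->
  has_wirt (fun w => Cmul (g w) (h w)) z (Cadd (Cmul dg (h z)) (Cmul (g z) dh)).
Proof.
  intros [bg [G1 [G2 [G3 G4]]]] [bh [H1 [H2 [H3 H4]]]].
  exists (Cadd (Cmul bg (h z)) (Cmul (g z) bh)).
  destruct z as [x y]; simpl in *.
  repeat split; simpl.
  - eapply derivable_pt_lim_ext; [intro t; reflexivity | |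
      apply derivable_pt_lim_minus; apply derivable_pt_lim_mult; eassumption]; simpl; ring.
  - eapply derivable_pt_lim_ext; [intro t; reflexivity | |
      apply derivable_pt_lim_plus; apply derivable_pt_lim_mult; eassumption]; simpl; ring.
  - eapply derivable_pt_lim_ext; [intro t; reflexivity | |
      apply derivable_pt_lim_minus; apply derivable_pt_lim_mult; eassumption]; simpl; ring.
  - eapply derivable_pt_lim_ext; [intro t; reflexivity | |
      apply derivable_pt_lim_plus; apply derivable_pt_lim_mult; eassumption]; simpl; ring.
Qed.

Lemma has_wirt_pow g z dg n : has_wirt g z dg ->
  has_wirt (fun w => Cpow (g w) n) z (Cmul (RtoC (INR n)) (Cmul (Cpow (g z) (n - 1)) dg)).
Proof.
  intro Hg. induction n.
  - apply (has_wirt_ext (fun _ => Cone) _ _ Czero); [intro w; reflexivity | | apply has_wirt_const]. apply Cplx_ext; simpl; ring.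
  - eapply has_wirt_ext; [ | | apply (has_wirt_mul _ _ _ _ _ Hg IHn)]; [intro w; reflexivity|].
    rewrite S_INR, RtoC_add.
    destruct n; simpl Cpow; rewrite ?Nat.sub_0_r.
    + simpl (INR 0). rewrite RtoC_0. simpl Cpow. rewrite RtoC_1. ring.
    + replace (S n - 1)%nat with n by lia. simpl Cpow. rewrite RtoC_1. ring.
Qed.

Lemma derivable_inv_one_plus_sq (a t0 : R) : 0 <= a ->
  derivable_pt_lim (fun t => / (1 + (t * t + a))) t0 (- (2 * t0) * (/ (1 + (t0 * t0 + a))) ^ 2).
Proof.
  intro Ha.
  assert (Hp : 1 + (t0 * t0 + a) <> 0) by nra.
  eapply derivable_pt_lim_ext; [ | |
    apply (derivable_pt_lim_div (fct_cte 1) (fun t => 1 + (t * t + a)) t0 0 (2 * t0))].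
  - intro t. unfold fct_cte, div_fct. simpl. field. nra.
  - unfold fct_cte, Rsqr. field. auto.
  - apply derivable_pt_lim_const.
  - eapply derivable_pt_lim_ext; [ | | apply derivable_pt_lim_plus; [apply derivable_pt_lim_const|
       apply derivable_pt_lim_plus; [apply derivable_pt_lim_mult; apply derivable_pt_lim_id | apply derivable_pt_lim_const]]].
    + intro t. unfold fct_cte, id, plus_fct, mult_fct. reflexivity.
    + unfold id. ring.
  - exact Hp.
Qed.

Definition hfac (z : Cplx) : Cplx := RtoC (/ (1 + Cnorm2 z)).

Lemma has_wirt_hfac z : has_wirt hfac z (Cmul (Copp (Cconj z)) (Cpow (hfac z) 2)).
Proof.
  exists (Cmul (Copp z) (Cpow (hfac z) 2)).
  destruct z as [x y]; unfold hfac, Cnorm2; split; [|split; [|split]]; simpl.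
  - eapply derivable_pt_lim_ext; [ | | apply (derivable_inv_one_plus_sq (y*y) x)]; [intro t; reflexivity | | nra]; ring.
  - eapply derivable_pt_lim_ext; [intro t; reflexivity | | apply derivable_pt_lim_const]; ring.
  - eapply derivable_pt_lim_ext; [ | | apply (derivable_inv_one_plus_sq (x*x) y)]; [intro t; simpl; replace (x*x+t*t) with (t*t+x*x) by ring; reflexivity | | nra]; simpl; replace (y*y+x*x) with (x*x+y*y) by ring; ring.
  - eapply derivable_pt_lim_ext; [intro t; reflexivity | | apply derivable_pt_lim_const]; ring.
Qed.

Lemma hfac_one_plus z : Cmul (hfac z) (Cadd Cone (Cmul z (Cconj z))) = Cone.
Proof.
  unfold hfac. rewrite Cmul_conj_norm2, <- RtoC_1, <- RtoC_add, <- RtoC_mul. f_equal.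
  assert (0 <= Cnorm2 z) by (unfold Cnorm2; nra). field. lra.
Qed.

Lemma hfac_pow_conj z n : Cconj (Cpow (hfac z) n) = Cpow (hfac z) n.
Proof. rewrite Cconj_pow. unfold hfac. rewrite Cconj_RtoC. reflexivity. Qed.

Lemma INR_fact_pos n : 0 < INR (fact n).
Proof. apply lt_0_INR. apply lt_O_fact. Qed.

Lemma binom_pos N j : (j <= N)%nat -> 0 < C N j.
Proof.
  intros. unfold C. pose proof (INR_fact_pos N). pose proof (INR_fact_pos j). pose proof (INR_fact_pos (N-j)).
  apply Rdiv_lt_0_compat; auto. apply Rmult_lt_0_compat; auto.
Qed.

Lemma binom_0 n : C n 0 = 1.
Proof. unfold C. rewrite Nat.sub_0_r. simpl. pose proof (INR_fact_pos n). field. lra. Qed.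

Lemma binom_diag n : C n n = 1.
Proof. unfold C. rewrite Nat.sub_diag. simpl. pose proof (INR_fact_pos n). field. lra. Qed.

Lemma binom_succ_succ N i : (i <= N)%nat -> C (S N) (S i) * INR (S i) = C N i * INR (S N).
Proof.
  intros H. unfold C. replace (S N - S i)%nat with (N - i)%nat by lia.
  rewrite !fact_simpl, !mult_INR.
  pose proof (INR_fact_pos N). pose proof (INR_fact_pos i). pose proof (INR_fact_pos (N-i)).
  field. repeat split; try lra. apply not_0_INR; lia.
Qed.

Lemma binom_succ_l N i : (i <= N)%nat -> C (S N) i * (INR (S N) - INR i) = C N i * INR (S N).
Proof.
  intros H. unfold C. replace (S N - i)%nat with (S (N - i))%nat by lia.
  rewrite !fact_simpl, !mult_INR.
  replace (INR (S N) - INR i) with (INR (S (N - i))) by (rewrite !S_INR, minus_INR by lia; ring).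
  pose proof (INR_fact_pos N). pose proof (INR_fact_pos i). pose proof (INR_fact_pos (N-i)).
  field. repeat split; try lra; apply not_0_INR; lia.
Qed.

Lemma inv_binom_succ_succ N l : (l <= N)%nat -> / C (S N) (S l) = INR (S l) * / INR (S N) * / C N l.
Proof.
  intro H. pose proof (binom_succ_succ N l H). pose proof (binom_pos N l H). pose proof (binom_pos (S N) (S l) ltac:(lia)).
  assert (0 < INR (S l)) by (apply lt_0_INR; lia). assert (0 < INR (S N)) by (apply lt_0_INR; lia).
  replace (C N l) with (C (S N) (S l) * INR (S l) / INR (S N)) by (rewrite H0; field; lra).
  field. lra.
Qed.

Lemma inv_binom_succ_l N l : (l <= N)%nat -> / C (S N) l = (INR (S N) - INR l) * / INR (S N) * / C N l.
Proof.
  intro H. pose proof (binom_succ_l N l H). pose proof (binom_pos N l H). pose proof (binom_pos (S N) l ltac:(lia)).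
  assert (0 < INR (S N)) by (apply lt_0_INR; lia).
  assert (INR l <= INR N) by (apply le_INR; lia). rewrite S_INR in *.
  replace (C N l) with (C (S N) l * (INR N + 1 - INR l) / (INR N + 1)) by (rewrite H0; field; lra).
  field. lra.
Qed.

Lemma binom_subset_of_subset N n j : (n <= j)%nat -> (j <= N)%nat -> C N n * C (N - n) (j - n) = C N j * C j n.
Proof.
  intros H1 H2. unfold C. replace (N - n - (j - n))%nat with (N - j)%nat by lia.
  pose proof (INR_fact_pos N). pose proof (INR_fact_pos j). pose proof (INR_fact_pos n).
  pose proof (INR_fact_pos (N - n)). pose proof (INR_fact_pos (j - n)). pose proof (INR_fact_pos (N - j)).
  field. repeat split; lra.
Qed.

Lemma sqrt_binom_sq N l : (l <= N)%nat -> sqrt (C N l) * sqrt (C N l) = C N l.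
Proof. intro H. apply sqrt_sqrt. left. apply binom_pos; auto. Qed.

Lemma sqrt_binom_pos N l : (l <= N)%nat -> 0 < sqrt (C N l).
Proof. intro H. apply sqrt_lt_R0. apply binom_pos; auto. Qed.

Definition ffact (N k : nat) : R := INR (fact N) / INR (fact (N - k)).

Lemma ffact_pos N k : 0 < ffact N k.
Proof. unfold ffact. apply Rdiv_lt_0_compat; apply INR_fact_pos. Qed.

Lemma ffact_succ N k : (S k <= N)%nat -> ffact N (S k) = ffact N k * INR (N - k).
Proof.
  intro H. unfold ffact. replace (N - k)%nat with (S (N - S k)) by lia.
  rewrite fact_simpl, mult_INR. pose proof (INR_fact_pos (N - S k)).
  assert (0 < INR (S (N - S k))) by (apply lt_0_INR; lia). field. lra.
Qed.

(* Vectors as coefficient sequences of polynomials in X.  poly_one is the constant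
   polynomial 1. *)
Definition poly_one : vec := fun j => match j with O => Cone | _ => Czero end.

(* Multiplication of a coefficient sequence by the linear polynomial a X + b. *)
Definition mul_lin (a b : Cplx) (c : vec) : vec := fun j =>
  Cadd (match j with O => Czero | S j' => Cmul a (c j') end) (Cmul b (c j)).

Definition mulP (z : Cplx) := mul_lin z Cone.

Definition mulQ (z : Cplx) := mul_lin Cone (Copp (Cconj z)).

(* pq_poly a b z = P^a Q^b, and gpoly N k z = P^(N-k) Q^k, the polynomial whose
   coefficients describe f_k. *)
Definition pq_poly (a b : nat) (z : Cplx) : vec := Nat.iter a (mulP z) (Nat.iter b (mulQ z) poly_one).

Definition gpoly (N k : nat) (z : Cplx) : vec := pq_poly (N - k) k z.

Definition bip (N : nat) (a b : vec) : Cplx :=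
  Csum (S N) (fun l => Cmul (RtoC (/ C N l)) (Cmul (Cconj (a l)) (b l))).

(* The adjoint of multiplication by A1 X + A2 for bip, up to the factor 1/(M+1):
   c |-> conj A1 (d/dX) c + conj A2 (M - X d/dX) c, on coefficients. *)
Definition lin_adj (M : nat) (A1 A2 : Cplx) (c : vec) : vec := fun j =>
  Cadd (Cmul (Cconj A1) (Cmul (RtoC (INR (S j))) (c (S j))))
       (Cmul (Cconj A2) (Cmul (RtoC (INR M - INR j)) (c j))).

Lemma mul_lin_comm a b a' b' c : mul_lin a b (mul_lin a' b' c) = mul_lin a' b' (mul_lin a b c).
Proof. extensionality j. unfold mul_lin. destruct j as [|[|j]]; ring. Qed.

Lemma iter_mul_lin_comm n a b a' b' c :
  Nat.iter n (mul_lin a b) (mul_lin a' b' c) = mul_lin a' b' (Nat.iter n (mul_lin a b) c).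
Proof. induction n; simpl. reflexivity. rewrite IHn. apply mul_lin_comm. Qed.

Lemma mul_lin_scal a b s c : mul_lin a b (fun i => Cmul s (c i)) = fun j => Cmul s (mul_lin a b c j).
Proof. extensionality j. unfold mul_lin. destruct j; ring. Qed.

Lemma mul_lin_zero a b : mul_lin a b (fun _ => Czero) = fun _ => Czero.
Proof. extensionality j. unfold mul_lin. destruct j; ring. Qed.

Lemma mul_lin_support a b c n : (forall j, (n < j)%nat -> c j = Czero) ->
  forall j, (S n < j)%nat -> mul_lin a b c j = Czero.
Proof.
  intros H j Hj. unfold mul_lin. destruct j as [|j]. lia.
  rewrite (H j) by lia. rewrite (H (S j)) by lia. ring.
Qed.

Lemma pq_poly_support a b z : forall j, (a + b < j)%nat -> pq_poly a b z j = Czero.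
Proof.
  unfold pq_poly. induction a; simpl.
  - induction b; simpl; intros j Hj.
    + destruct j. lia. reflexivity.
    + apply (mul_lin_support _ _ _ b); [intros; apply IHb; lia | lia].
  - intros j Hj. apply (mul_lin_support _ _ _ (a + b)); [intros; apply IHa; lia | lia].
Qed.

Lemma pq_poly_pure_P z : forall N j, (j <= N)%nat -> pq_poly N 0 z j = Cmul (RtoC (C N j)) (Cpow z j).
Proof.
  induction N; intros j Hj.
  - assert (j = 0%nat) by lia. subst. unfold C; simpl. apply Cplx_ext; simpl; field.
  - unfold pq_poly; simpl Nat.iter. change (Nat.iter N (mulP z) poly_one) with (pq_poly N 0 z). unfold mulP, mul_lin. destruct j as [|j].
    + rewrite IHN by lia. rewrite !binom_0. simpl. ring.
    + destruct (Nat.eq_dec j N) as [->|Hne].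
      * rewrite IHN by lia. rewrite (pq_poly_support N 0 z (S N)) by lia. rewrite !binom_diag. simpl Cpow. ring.
      * rewrite !IHN by lia. rewrite <- pascal by lia. rewrite RtoC_add. simpl Cpow. ring.
Qed.

Lemma pq_poly_pure_Q z : forall N j, (j <= N)%nat ->
  pq_poly 0 N z j = Cmul (RtoC (C N j)) (Cpow (Copp (Cconj z)) (N - j)).
Proof.
  induction N; intros j Hj.
  - assert (j = 0%nat) by lia. subst. unfold C; simpl. apply Cplx_ext; simpl; field.
  - unfold pq_poly; simpl Nat.iter. change (Nat.iter N (mulQ z) poly_one) with (pq_poly 0 N z). unfold mulQ, mul_lin. destruct j as [|j].
    + rewrite IHN by lia. rewrite !binom_0, !Nat.sub_0_r. simpl Cpow. ring.
    + destruct (Nat.eq_dec j N) as [->|Hne].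
      * rewrite IHN by lia. rewrite (pq_poly_support 0 N z (S N)) by lia. rewrite !binom_diag, !Nat.sub_diag. simpl Cpow. ring.
      * rewrite !IHN by lia. rewrite <- pascal by lia. rewrite RtoC_add.
        replace (S N - S j)%nat with (S (N - S j)) by lia. replace (N - j)%nat with (S (N - S j)) by lia.
        simpl Cpow. ring.
Qed.

(* Leibniz rule for lin_adj: commuting it past a linear factor B produces the
   scalar <A, B> = conj A1 B1 + conj A2 B2. *)
Lemma lin_adj_mul_lin M A1 A2 B1 B2 c j :
  lin_adj (S M) A1 A2 (mul_lin B1 B2 c) j =
  Cadd (Cmul (Cadd (Cmul (Cconj A1) B1) (Cmul (Cconj A2) B2)) (c j)) (mul_lin B1 B2 (lin_adj M A1 A2 c) j).
Proof.
  unfold lin_adj, mul_lin. destruct j as [|j].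
  - rewrite !S_INR. simpl INR. rewrite !RtoC_sub, !RtoC_add, RtoC_0, RtoC_1. ring.
  - rewrite !S_INR. rewrite !RtoC_sub, !RtoC_add, RtoC_1. ring.
Qed.

Lemma lin_adj_poly_one A1 A2 j : lin_adj 0 A1 A2 poly_one j = Czero.
Proof.
  unfold lin_adj, poly_one. destruct j; simpl INR. rewrite Rminus_0_r, RtoC_0. ring. ring.
Qed.

Lemma norm_identity_P (z : Cplx) : RtoC (1 + Cnorm2 z) = Cadd (Cmul (Cconj z) z) (Cmul (Cconj Cone) Cone).
Proof. apply Cplx_ext; unfold Cnorm2; simpl; ring. Qed.

Lemma norm_identity_Q (z : Cplx) : RtoC (1 + Cnorm2 z) =
  Cadd (Cmul (Cconj Cone) Cone) (Cmul (Cconj (Copp (Cconj z))) (Copp (Cconj z))).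
Proof. apply Cplx_ext; unfold Cnorm2; simpl; ring. Qed.

(* The adjoint of P kills Q^b, since <P, Q> = 0. *)
Lemma lin_adj_P_pure_Q z b : forall j, lin_adj b z Cone (pq_poly 0 b z) j = Czero.
Proof.
  unfold pq_poly; simpl. induction b; intros j.
  - apply lin_adj_poly_one.
  - simpl. unfold mulQ at 1. rewrite lin_adj_mul_lin.
    replace (lin_adj b z Cone (Nat.iter b (mulQ z) poly_one)) with (fun _ : nat => Czero)
      by (extensionality i; symmetry; apply IHb).
    rewrite mul_lin_zero. apply Cplx_ext; simpl; ring.
Qed.

Lemma lin_adj_P z a b : forall j, lin_adj (a + b) z Cone (pq_poly a b z) j =
  Cmul (RtoC (INR a * (1 + Cnorm2 z))) (pq_poly (a - 1) b z j).
Proof.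
  induction a; intros j.
  - simpl. rewrite lin_adj_P_pure_Q. apply Cplx_ext; simpl; ring.
  - simpl plus. unfold pq_poly; simpl Nat.iter. unfold mulP at 1. rewrite lin_adj_mul_lin.
    fold (pq_poly a b z).
    replace (lin_adj (a + b) z Cone (pq_poly a b z)) with
      (fun i => Cmul (RtoC (INR a * (1 + Cnorm2 z))) (pq_poly (a - 1) b z i))
      by (extensionality i; symmetry; apply IHa).
    rewrite mul_lin_scal. rewrite <- norm_identity_P.
    destruct a.
    + simpl. rewrite Rmult_0_l, Rmult_1_l, RtoC_0. unfold pq_poly; simpl. ring.
    + replace (S (S a) - 1)%nat with (S a) by lia. replace (S a - 1)%nat with a by lia.
      unfold pq_poly. simpl Nat.iter. fold (mulP z).
      rewrite !S_INR, !RtoC_mul, !RtoC_add, !RtoC_1. ring.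
Qed.

Lemma lin_adj_Q z b : forall j, lin_adj b Cone (Copp (Cconj z)) (pq_poly 0 b z) j =
  Cmul (RtoC (INR b * (1 + Cnorm2 z))) (pq_poly 0 (b - 1) z j).
Proof.
  unfold pq_poly; simpl. induction b; intros j.
  - rewrite lin_adj_poly_one. apply Cplx_ext; simpl; ring.
  - simpl Nat.iter. unfold mulQ at 1. rewrite lin_adj_mul_lin.
    replace (lin_adj b Cone (Copp (Cconj z)) (Nat.iter b (mulQ z) poly_one)) with
      (fun i => Cmul (RtoC (INR b * (1 + Cnorm2 z))) (Nat.iter (b - 1) (mulQ z) poly_one i))
      by (extensionality i; symmetry; apply IHb).
    rewrite mul_lin_scal. rewrite <- norm_identity_Q.
    destruct b.
    + simpl. rewrite Rmult_0_l, Rmult_1_l, RtoC_0. ring.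
    + replace (S (S b) - 1)%nat with (S b) by lia. replace (S b - 1)%nat with b by lia.
      simpl Nat.iter. fold (mulQ z).
      rewrite !S_INR, !RtoC_mul, !RtoC_add, !RtoC_1. ring.
Qed.

Lemma bip_mul_lin N al be a b : a (S N) = Czero ->
  bip (S N) (mul_lin al be a) b = Cmul (RtoC (/ INR (S N))) (bip N a (lin_adj (S N) al be b)).
Proof.
  intro Ha. unfold bip.
  transitivity (Cadd
    (Csum (S (S N)) (fun l => Cmul (RtoC (/ C (S N) l)) (Cmul (Cconj (match l with O => Czero | S l' => Cmul al (a l') end)) (b l))))
    (Csum (S (S N)) (fun l => Cmul (RtoC (/ C (S N) l)) (Cmul (Cconj (Cmul be (a l))) (b l))))).
  { rewrite <- Csum_add. apply Csum_ext. intros l _. unfold mul_lin. rewrite Cconj_add. ring. }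
  rewrite Csum_shift. change (Csum (S (S N)) ?f) with (Cadd (Csum (S N) f) (f (S N))).
  cbv beta. rewrite Ha. rewrite <- Csum_scal.
  transitivity (Csum (S N) (fun l => Cadd
     (Cmul (RtoC (/ C (S N) (S l))) (Cmul (Cconj (Cmul al (a l))) (b (S l))))
     (Cmul (RtoC (/ C (S N) l)) (Cmul (Cconj (Cmul be (a l))) (b l))))).
  { rewrite Csum_add. rewrite Cconj_0. rewrite !Cconj_mul, Cconj_0. ring. }
  apply Csum_ext. intros l Hl. unfold lin_adj.
  rewrite inv_binom_succ_succ, inv_binom_succ_l by lia. rewrite !Cconj_mul.
  rewrite !RtoC_mul, !RtoC_sub. ring.
Qed.

Lemma bip_conj_sym N a b : bip N b a = Cconj (bip N a b).
Proof.
  unfold bip. rewrite Csum_conj. apply Csum_ext. intros l _.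
  rewrite !Cconj_mul, Cconj_RtoC, Cconj_conj. ring.
Qed.

Lemma bip_scal_r N a s b : bip N a (fun j => Cmul s (b j)) = Cmul s (bip N a b).
Proof.
  unfold bip. rewrite <- Csum_scal. apply Csum_ext. intros; ring.
Qed.

Lemma bip_ext N a b a' b' : (forall j, (j <= N)%nat -> a j = a' j) -> (forall j, (j <= N)%nat -> b j = b' j) ->
  bip N a b = bip N a' b'.
Proof. intros H1 H2. unfold bip. apply Csum_ext. intros l Hl. rewrite H1, H2 by lia. reflexivity. Qed.

Lemma gpoly_succ_N N k z : (k <= N)%nat -> gpoly (S N) k z = mulP z (gpoly N k z).
Proof. intro H. unfold gpoly. replace (S N - k)%nat with (S (N - k)) by lia. reflexivity. Qed.

Lemma gpoly_succ_diag N z : gpoly (S N) (S N) z = mulQ z (gpoly N N z).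
Proof. unfold gpoly, pq_poly. rewrite !Nat.sub_diag. reflexivity. Qed.

Lemma gpoly_top_zero N k z : (k <= N)%nat -> gpoly N k z (S N) = Czero.
Proof. intro H. unfold gpoly. apply pq_poly_support. lia. Qed.

Lemma lin_adj_P_gpoly N l z : (l <= S N)%nat -> forall j,
  lin_adj (S N) z Cone (gpoly (S N) l z) j = Cmul (RtoC (INR (S N - l) * (1 + Cnorm2 z))) (gpoly N l z j).
Proof.
  intros H j. unfold gpoly. replace (S N) with (S N - l + l)%nat at 1 by lia.
  rewrite lin_adj_P. destruct (Nat.eq_dec l (S N)) as [->|Hl].
  - rewrite Nat.sub_diag. simpl. rewrite Rmult_0_l. apply Cplx_ext; simpl; ring.
  - replace (S N - l - 1)%nat with (N - l)%nat by lia. reflexivity.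
Qed.

Lemma lin_adj_Q_gpoly N z : forall j,
  lin_adj (S N) Cone (Copp (Cconj z)) (gpoly (S N) (S N) z) j = Cmul (RtoC (INR (S N) * (1 + Cnorm2 z))) (gpoly N N z j).
Proof.
  intros j. unfold gpoly. rewrite !Nat.sub_diag. rewrite lin_adj_Q. simpl (S N - 1)%nat. rewrite Nat.sub_0_r. reflexivity.
Qed.

Definition gpoly_gram (N : nat) (z : Cplx) (k l : nat) : Cplx :=
  if Nat.eqb k l then RtoC ((1 + Cnorm2 z) ^ N / C N k) else Czero.

Lemma gram_norm_step N k u : (k <= N)%nat -> 0 <= u ->
  / INR (S N) * (INR (S N - k) * (1 + u) * ((1 + u) ^ N / C N k)) = (1 + u) ^ S N / C (S N) k.
Proof.
  intros Hk Hu.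
  pose proof (binom_succ_l N k Hk) as Hrec. pose proof (binom_pos N k Hk).
  pose proof (binom_pos (S N) k ltac:(lia)).
  assert (0 < INR (S N)) by (apply lt_0_INR; lia).
  assert (INR k <= INR N) by (apply le_INR; lia).
  rewrite minus_INR by lia. simpl pow.
  replace (C (S N) k) with (C N k * INR (S N) / (INR (S N) - INR k)).
  2:{ rewrite <- Hrec. field. rewrite S_INR in *. lra. }
  field. rewrite S_INR in *. repeat split; lra.
Qed.

(* Induction step for the rows k <= N: write gpoly (N+1) k = P * gpoly N k and move
   the factor P to the other side of the inner product. *)
Lemma gpoly_gram_step_P N z :
  (forall k l, (k <= N)%nat -> (l <= N)%nat -> bip N (gpoly N k z) (gpoly N l z) = gpoly_gram N z k l) ->
  forall k l, (k <= N)%nat -> (l <= S N)%nat ->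
  bip (S N) (gpoly (S N) k z) (gpoly (S N) l z) = gpoly_gram (S N) z k l.
Proof.
  intros IH k l Hk Hl. unfold gpoly_gram.
  rewrite gpoly_succ_N by auto. unfold mulP. rewrite bip_mul_lin by (apply gpoly_top_zero; auto).
  rewrite (bip_ext N _ _ (gpoly N k z) (fun j => Cmul (RtoC (INR (S N - l) * (1 + Cnorm2 z))) (gpoly N l z j)));
    [| intros; reflexivity | intros; apply lin_adj_P_gpoly; auto].
  rewrite bip_scal_r.
  destruct (Nat.eq_dec l (S N)) as [->|Hl'].
  - rewrite Nat.sub_diag. replace (Nat.eqb k (S N)) with false by (symmetry; apply Nat.eqb_neq; lia).
    simpl INR. rewrite Rmult_0_l, RtoC_0. ring.
  - rewrite IH by lia. unfold gpoly_gram. destruct (Nat.eqb_spec k l).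
    + subst l. rewrite <- !RtoC_mul. f_equal. apply gram_norm_step; auto. unfold Cnorm2; nra.
    + ring.
Qed.

Lemma gpoly_norm_step_Q N z :
  bip N (gpoly N N z) (gpoly N N z) = gpoly_gram N z N N ->
  bip (S N) (gpoly (S N) (S N) z) (gpoly (S N) (S N) z) = gpoly_gram (S N) z (S N) (S N).
Proof.
  intro IH. unfold gpoly_gram in *. rewrite Nat.eqb_refl in *.
  rewrite gpoly_succ_diag at 1. unfold mulQ. rewrite bip_mul_lin by (apply gpoly_top_zero; auto).
  rewrite (bip_ext N _ _ (gpoly N N z) (fun j => Cmul (RtoC (INR (S N) * (1 + Cnorm2 z))) (gpoly N N z j)));
    [| intros; reflexivity | intros; apply lin_adj_Q_gpoly].
  rewrite bip_scal_r, IH. rewrite <- !RtoC_mul. f_equal.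
  rewrite !binom_diag. simpl pow. assert (0 < INR (S N)) by (apply lt_0_INR; lia). field. lra.
Qed.

Lemma gpoly_orthogonal z N : forall k l, (k <= N)%nat -> (l <= N)%nat ->
  bip N (gpoly N k z) (gpoly N l z) = gpoly_gram N z k l.
Proof.
  induction N as [|N IHN]; intros k l Hk Hl.
  - assert (k = 0%nat) by lia. assert (l = 0%nat) by lia. subst. simpl.
    unfold bip, gpoly, pq_poly, gpoly_gram. simpl. unfold C. simpl. apply Cplx_ext; simpl; field.
  - destruct (le_lt_dec k N) as [Hk'|Hk'].
    + apply gpoly_gram_step_P; auto.
    + assert (k = S N) by lia. subst k.
      destruct (le_lt_dec l N) as [Hl'|Hl'].
      * rewrite bip_conj_sym, gpoly_gram_step_P by auto. unfold gpoly_gram.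
        replace (Nat.eqb l (S N)) with false by (symmetry; apply Nat.eqb_neq; lia).
        replace (Nat.eqb (S N) l) with false by (symmetry; apply Nat.eqb_neq; lia). apply Cconj_0.
      * assert (l = S N) by lia. subst l. apply gpoly_norm_step_Q, IHN; auto.
Qed.

Lemma has_wirt_mul_lin (A B : Cplx -> Cplx) (c : Cplx -> vec) z0 dA dB (dc : vec) j :
  has_wirt A z0 dA -> has_wirt B z0 dB -> (forall i, has_wirt (fun z => c z i) z0 (dc i)) ->
  has_wirt (fun z => mul_lin (A z) (B z) (c z) j) z0 (Cadd (mul_lin dA dB (c z0) j) (mul_lin (A z0) (B z0) dc j)).
Proof.
  intros HA HB Hc. unfold mul_lin. destruct j as [|j].
  - pose proof (has_wirt_add _ _ _ _ _ (has_wirt_const Czero z0) (has_wirt_mul B (fun z => c z 0%nat) _ _ _ HB (Hc 0%nat))) as H.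
    eapply has_wirt_ext; [ | | exact H]; [intro w; reflexivity|]. cbv beta iota; ring.
  - pose proof (has_wirt_add _ _ _ _ _ (has_wirt_mul A (fun z => c z j) _ _ _ HA (Hc j)) (has_wirt_mul B (fun z => c z (S j)) _ _ _ HB (Hc (S j)))) as H.
    eapply has_wirt_ext; [ | | exact H]; [intro w; reflexivity|]. cbv beta iota; ring.
Qed.

(* Q^b depends on conj z only, so its Wirtinger derivative vanishes. *)
Lemma has_wirt_pq_poly_pure_Q b z0 : forall j, has_wirt (fun z => pq_poly 0 b z j) z0 Czero.
Proof.
  unfold pq_poly; simpl. induction b; intro j; simpl.
  - apply has_wirt_const.
  - unfold mulQ. pose proof (has_wirt_mul_lin (fun _ => Cone) (fun z => Copp (Cconj z)) (fun z => Nat.iter b (mulQ z) poly_one) z0 Czero (Copp Czero) (fun _ => Czero) j (has_wirt_const _ _) (has_wirt_opp _ _ _ (has_wirt_conj z0)) IHb) as H.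
    eapply has_wirt_ext; [ | | exact H]; [intro w; reflexivity|].
    rewrite mul_lin_zero. unfold mul_lin. destruct j; ring.
Qed.

(* d (P^a Q^b) = a X P^(a-1) Q^b, since d P = X and d Q = 0. *)
Lemma has_wirt_pq_poly a b z0 : forall j,
  has_wirt (fun z => pq_poly a b z j) z0 (Cmul (RtoC (INR a)) (mul_lin Cone Czero (pq_poly (a - 1) b z0) j)).
Proof.
  induction a; intro j.
  - eapply has_wirt_ext; [ | | apply has_wirt_pq_poly_pure_Q]; [intro; reflexivity|]. simpl. rewrite RtoC_0. ring.
  - unfold pq_poly; simpl Nat.iter. unfold mulP.
    pose proof (has_wirt_mul_lin (fun z => z) (fun _ => Cone) (fun z => pq_poly a b z) z0 Cone Czero _ j (has_wirt_id z0) (has_wirt_const _ _) IHa) as H.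
    eapply has_wirt_ext; [ | | exact H]; [intro w; reflexivity|].
    rewrite mul_lin_scal.
    fold (pq_poly a b z0).
    destruct a.
    + simpl. rewrite RtoC_0. unfold mul_lin. destruct j; rewrite ?RtoC_1; ring.
    + replace (S (S a) - 1)%nat with (S a) by lia. replace (S a - 1)%nat with a by lia.
      rewrite (mul_lin_comm z0 Cone Cone Czero).
      change (mul_lin z0 Cone (pq_poly a b z0)) with (pq_poly (S a) b z0).
      rewrite !S_INR, !RtoC_add, RtoC_1. rewrite ?Nat.sub_0_r. change (Nat.iter (S a) (mul_lin z0 Cone) (Nat.iter b (mulQ z0) poly_one)) with (pq_poly (S a) b z0). ring.
Qed.

Definition fvec (N k : nat) (z : Cplx) : vec := fun j =>
  Cmul (RtoC (ffact N k / sqrt (C N j))) (Cmul (Cpow (hfac z) k) (gpoly N k z j)).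

Definition fvec_wirt (N k : nat) (z : Cplx) : vec := fun j =>
  Cmul (RtoC (ffact N k / sqrt (C N j)))
   (Cadd (Cmul (Cmul (RtoC (INR k)) (Cmul (Cpow (hfac z) (k - 1)) (Cmul (Copp (Cconj z)) (Cpow (hfac z) 2)))) (gpoly N k z j))
         (Cmul (Cpow (hfac z) k) (Cmul (RtoC (INR (N - k))) (mul_lin Cone Czero (pq_poly (N - k - 1) k z) j)))).

Lemma has_wirt_fvec N k z0 j : has_wirt (fun z => fvec N k z j) z0 (fvec_wirt N k z0 j).
Proof.
  pose proof (has_wirt_mul _ _ _ _ _ (has_wirt_pow _ _ _ k (has_wirt_hfac z0)) (has_wirt_pq_poly (N - k) k z0 j)) as H1.
  pose proof (has_wirt_mul _ _ _ _ _ (has_wirt_const (RtoC (ffact N k / sqrt (C N j))) z0) H1) as H2.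
  eapply has_wirt_ext; [ | | exact H2]; [intro w; reflexivity|].
  unfold fvec_wirt, gpoly. ring.
Qed.

(* The coefficient of fvec_k in the derivative of fvec_k. *)
Definition shift_coef (N k : nat) (z : Cplx) : Cplx :=
  Cmul (RtoC (INR (N - k) - INR k)) (Cmul (Cconj z) (hfac z)).

(* Cancels a term carrying the factor 1 - h (1 + z conj z), which vanishes. *)
Lemma eq_drop_vanishing (X Y T H K : Cplx) : Cmul H K = Cone -> X = Cadd Y (Cmul T (Csub Cone (Cmul H K))) -> X = Y.
Proof. intros E1 E2. rewrite E2, E1. ring. Qed.

(* The derivative of fvec_k is fvec_(k+1) + shift_coef * fvec_k: differentiating
   P^(N-k) gives X P^(N-k-1) Q^k, and X = Q + conj z splits it into the g_(k+1) part
   and a multiple of g_k, which combines with the derivative of h^k. *)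
Lemma fvec_wirt_recursion N k z j : (S k <= N)%nat ->
  Csub (fvec_wirt N k z j) (fvec N (S k) z j) = Cmul (shift_coef N k z) (fvec N k z j).
Proof.
  intro Hk. unfold fvec_wirt, fvec, shift_coef.
  assert (EG1 : gpoly N k z = mulP z (pq_poly (N - k - 1) k z)).
  { unfold gpoly. replace (N - k)%nat with (S (N - k - 1)) at 1 by lia. reflexivity. }
  assert (EG2 : gpoly N (S k) z = mulQ z (pq_poly (N - k - 1) k z)).
  { unfold gpoly, pq_poly. simpl Nat.iter. replace (N - S k)%nat with (N - k - 1)%nat by lia.
    unfold mulQ at 1. apply iter_mul_lin_comm. }
  rewrite EG1, EG2, ffact_succ by auto.
  set (Q := pq_poly (N - k - 1) k z).
  set (c := ffact N k / sqrt (C N j)).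
  replace (ffact N k * INR (N - k) / sqrt (C N j)) with (c * INR (N - k)) by (unfold c, Rdiv; ring).
  rewrite !RtoC_mul, !RtoC_sub.
  set (m := RtoC (INR (N - k))).
  unfold mulP, mulQ, mul_lin.
  destruct k as [|k'].
  - simpl Cpow. simpl INR. rewrite RtoC_0.
    destruct j as [|j].
    + ring.
    + apply (eq_drop_vanishing _ _ (Cmul (RtoC c) (Cmul m (Q j))) (hfac z) (Cadd Cone (Cmul z (Cconj z))) (hfac_one_plus z)).
      ring.
  - replace (S k' - 1)%nat with k' by lia. simpl Cpow. rewrite S_INR, RtoC_add, RtoC_1.
    destruct j as [|j].
    + ring.
    + apply (eq_drop_vanishing _ _ (Cmul (RtoC c) (Cmul (Cmul (hfac z) (Cpow (hfac z) k')) (Cmul m (Q j)))) (hfac z) (Cadd Cone (Cmul z (Cconj z))) (hfac_one_plus z)).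
      ring.
Qed.

Lemma dotc_fvec N k k' z :
  dotc N (fvec N k z) (fvec N k' z) =
  Cmul (RtoC (ffact N k * ffact N k')) (Cmul (Cmul (Cpow (hfac z) k) (Cpow (hfac z) k')) (bip N (gpoly N k z) (gpoly N k' z))).
Proof.
  unfold dotc, bip. rewrite <- !Csum_scal. apply Csum_ext. intros l Hl.
  unfold fvec. rewrite !Cconj_mul, Cconj_RtoC, hfac_pow_conj.
  assert (E : RtoC (ffact N k / sqrt (C N l)) = Cmul (RtoC (ffact N k)) (RtoC (/ sqrt (C N l)))) by (rewrite <- RtoC_mul; reflexivity).
  assert (E' : RtoC (ffact N k' / sqrt (C N l)) = Cmul (RtoC (ffact N k')) (RtoC (/ sqrt (C N l)))) by (rewrite <- RtoC_mul; reflexivity).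
  rewrite E, E'.
  assert (E2 : RtoC (/ C N l) = Cmul (RtoC (/ sqrt (C N l))) (RtoC (/ sqrt (C N l)))).
  { rewrite <- RtoC_mul. f_equal. rewrite <- Rinv_mult, sqrt_binom_sq by lia. reflexivity. }
  rewrite E2, RtoC_mul. ring.
Qed.

Definition fvec_norm2 (N k : nat) (z : Cplx) : R :=
  ffact N k * ffact N k * (/ (1 + Cnorm2 z)) ^ k * (/ (1 + Cnorm2 z)) ^ k * ((1 + Cnorm2 z) ^ N / C N k).

Lemma fvec_norm2_pos N k z : (k <= N)%nat -> 0 < fvec_norm2 N k z.
Proof.
  intro H. unfold fvec_norm2.
  assert (Hu : 0 < 1 + Cnorm2 z) by (unfold Cnorm2; nra).
  pose proof (ffact_pos N k). pose proof (binom_pos N k H).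
  assert (0 < (/ (1 + Cnorm2 z)) ^ k) by (apply pow_lt, Rinv_0_lt_compat; lra).
  assert (0 < (1 + Cnorm2 z) ^ N / C N k) by (apply Rdiv_lt_0_compat; [apply pow_lt|]; lra).
  apply Rmult_lt_0_compat; [|assumption].
  apply Rmult_lt_0_compat; [|assumption].
  apply Rmult_lt_0_compat; [|assumption].
  apply Rmult_lt_0_compat; assumption.
Qed.

Lemma dotc_fvec_self N k z : (k <= N)%nat -> dotc N (fvec N k z) (fvec N k z) = RtoC (fvec_norm2 N k z).
Proof.
  intro H. rewrite dotc_fvec, gpoly_orthogonal by auto. unfold gpoly_gram. rewrite Nat.eqb_refl.
  unfold fvec_norm2, hfac. rewrite <- !RtoC_pow, <- !RtoC_mul. f_equal. ring.
Qed.

Lemma dotc_fvec_next N k z : (S k <= N)%nat -> dotc N (fvec N k z) (fvec N (S k) z) = Czero.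
Proof.
  intro H. rewrite dotc_fvec, gpoly_orthogonal by lia. unfold gpoly_gram.
  replace (Nat.eqb k (S k)) with false by (symmetry; apply Nat.eqb_neq; lia). ring.
Qed.

Lemma proj_remove_component N (F D G : vec) beta j :
  dotc N F F <> Czero -> dotc N F G = Czero ->
  (forall l, (l <= N)%nat -> D l = Cadd (G l) (Cmul beta (F l))) -> (j <= N)%nat ->
  Csub (D j) (Csum (S N) (fun l => Cmul (proj N F j l) (D l))) = G j.
Proof.
  intros HFF HFG HD Hj.
  assert (Hsum : Csum (S N) (fun l => Cmul (proj N F j l) (D l)) =
                 Cmul (Cdiv (F j) (dotc N F F)) (dotc N F D)).
  { unfold proj, Cdiv, dotc. rewrite <- Csum_scal. apply Csum_ext. intros l _. ring. }
  rewrite Hsum, (dotc_ext N F D F (fun l => Cadd (G l) (Cmul beta (F l)))) by auto.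
  rewrite dotc_lin, HFG, HD by auto. field. exact HFF.
Qed.

Lemma veronese_fvec_0 N z j : (j <= N)%nat -> veronese N 0 z j = fvec N 0 z j.
Proof.
  intro Hj. simpl. unfold fvec, gpoly, ffact. rewrite Nat.sub_0_r. simpl Cpow.
  rewrite pq_poly_pure_P by auto. unfold Rdiv. rewrite Rinv_r by (apply INR_fact_neq_0).
  assert (HS := sqrt_binom_pos N j Hj).
  assert (E : RtoC (C N j) = Cmul (RtoC (sqrt (C N j))) (RtoC (sqrt (C N j))))
    by (rewrite <- RtoC_mul, sqrt_binom_sq; auto).
  rewrite E, Rmult_1_l, RtoC_inv. field. apply RtoC_neq. lra.
Qed.

(* The Veronese sequence is the explicit sequence fvec: by induction on k, the
   derivative of f_k = fvec_k is fvec_(k+1) + shift_coef * fvec_k with fvec_(k+1)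
   orthogonal to fvec_k, so the projection in the recursion removes the second term. *)
Lemma veronese_fvec N : forall k, (k <= N)%nat -> forall z j, (j <= N)%nat -> veronese N k z j = fvec N k z j.
Proof.
  induction k as [|k IHk]; intros Hk z j Hj.
  - apply veronese_fvec_0; exact Hj.
  - assert (IH := IHk ltac:(lia)).
    assert (Hw : forall l, (l <= N)%nat -> wirt (fun z => veronese N k z l) z = fvec_wirt N k z l).
    { intros l Hl. rewrite (wirt_ext _ (fun z => fvec N k z l)) by (intro; apply IH; auto).
      apply wirt_val, has_wirt_fvec. }
    change (veronese N (S k) z j) with
      (Csub (wirt (fun z => veronese N k z j) z)
        (Csum (S N) (fun l => Cmul (proj N (veronese N k z) j l) (wirt (fun z => veronese N k z l) z)))).
    rewrite Hw by auto.
    rewrite (Csum_ext _ _ (fun l => Cmul (proj N (fvec N k z) j l) (fvec_wirt N k z l))).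
    2:{ intros l Hl. rewrite Hw, (proj_ext N _ (fvec N k z)) by (auto; lia). reflexivity. }
    apply (proj_remove_component N _ _ _ (shift_coef N k z)); auto.
    + rewrite dotc_fvec_self by lia. apply RtoC_neq, Rgt_not_eq, fvec_norm2_pos. lia.
    + apply dotc_fvec_next. lia.
    + intros l Hl. rewrite <- (fvec_wirt_recursion N k z l) by lia. ring.
Qed.

Lemma Rsum_ext n f g : (forall l, (l < n)%nat -> f l = g l) -> Rsum n f = Rsum n g.
Proof. induction n; intros H; simpl. reflexivity. rewrite IHn, H; auto. Qed.

Lemma Rsum_scal n a f : Rsum n (fun l => a * f l) = a * Rsum n f.
Proof. induction n; simpl. ring. rewrite IHn; ring. Qed.

Lemma Rsum_add n f g : Rsum n (fun l => f l + g l) = Rsum n f + Rsum n g.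
Proof. induction n; simpl. ring. rewrite IHn; ring. Qed.

Lemma Rsum_extend m d f : (forall n, (m <= n < m + d)%nat -> f n = 0) -> Rsum m f = Rsum (m + d) f.
Proof.
  induction d; intros H. rewrite Nat.add_0_r; reflexivity.
  rewrite Nat.add_succ_r. simpl. rewrite <- IHd by (intros; apply H; lia). rewrite (H (m + d)%nat) by lia. ring.
Qed.

Lemma Rsum_sum_f n f : Rsum (S n) f = sum_f_R0 f n.
Proof. induction n. simpl. ring. change (Rsum (S (S n)) f) with (Rsum (S n) f + f (S n)). rewrite IHn. reflexivity. Qed.

(* (-a)_n = (-1)^n a!/(a-n)! for n <= a, and (-a)_n = 0 for n > a: the sum
   defining K_j(k) terminates. *)
Lemma poch_neg_nat_le a n : (n <= a)%nat -> poch (- INR a) n = (-1) ^ n * INR (fact a) / INR (fact (a - n)).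
Proof.
  induction n; intro H.
  - simpl. rewrite Nat.sub_0_r. pose proof (INR_fact_pos a). field. lra.
  - simpl poch. rewrite IHn by lia.
    replace (a - n)%nat with (S (a - S n)) by lia. rewrite fact_simpl, mult_INR.
    replace (INR (S (a - S n))) with (INR a - INR n) by (rewrite S_INR, minus_INR by lia; rewrite S_INR; ring).
    pose proof (INR_fact_pos (a - S n)). assert (INR n < INR a) by (apply lt_INR; lia).
    simpl pow. field. lra.
Qed.

Lemma poch_neg_nat_gt a n : (a < n)%nat -> poch (- INR a) n = 0.
Proof.
  induction n; intro H. lia.
  simpl poch. destruct (Nat.eq_dec n a) as [->|Hne]. ring.
  rewrite IHn by lia. ring.
Qed.

(* The n-th term of C(N,j) K_j(k;p,N) with r = 1/p, in the form
   (-1)^n C(k,n) C(N-n,j-n) r^n, which satisfies Pascal recursions in (N, j). *)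
Definition kraw_term (N k j : nat) (r : R) (n : nat) : R :=
  if Nat.leb n j then (-1) ^ n * C k n * C (N - n) (j - n) * r ^ n else 0.

Lemma binom_kraw_expand N k j p : (j <= N)%nat -> (k <= N)%nat -> p <> 0 ->
  C N j * kraw j k p N = Rsum (S k) (kraw_term N k j (/ p)).
Proof.
  intros Hj Hk Hp. unfold kraw.
  set (term := fun n : nat => poch (- INR j) n * poch (- INR k) n / (poch (- INR N) n * INR (fact n)) * / p ^ n).
  assert (Hext : Rsum (S (Nat.min j k)) term = Rsum (S k) term).
  { replace (S k) with (S (Nat.min j k) + (k - Nat.min j k))%nat by lia.
    apply Rsum_extend. intros n Hn. unfold term. rewrite (poch_neg_nat_gt j n) by lia. unfold Rdiv; ring. }
  rewrite Hext, <- Rsum_scal. apply Rsum_ext. intros n Hn. unfold term, kraw_term.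
  destruct (Nat.leb_spec n j) as [Hnj|Hnj].
  - rewrite !poch_neg_nat_le by lia. rewrite pow_inv.
    unfold C. replace (N - n - (j - n))%nat with (N - j)%nat by lia.
    pose proof (INR_fact_pos N). pose proof (INR_fact_pos j). pose proof (INR_fact_pos k). pose proof (INR_fact_pos n).
    pose proof (INR_fact_pos (N - n)). pose proof (INR_fact_pos (j - n)). pose proof (INR_fact_pos (k - n)).
    pose proof (INR_fact_pos (N - j)).
    assert ((-1) ^ n <> 0) by (apply pow_nonzero; lra).
    assert (p ^ n <> 0) by (apply pow_nonzero; auto).
    field. repeat split; lra.
  - rewrite (poch_neg_nat_gt j n) by lia. unfold Rdiv; ring.
Qed.

Lemma kraw_term_pascal N k j r n : (j < N)%nat -> kraw_term (S N) k (S j) r n = kraw_term N k (S j) r n + kraw_term N k j r n.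
Proof.
  intro Hj. unfold kraw_term.
  destruct (Nat.leb_spec n (S j)); destruct (Nat.leb_spec n j); try lia.
  - replace (S N - n)%nat with (S (N - n)) by lia. replace (S j - n)%nat with (S (j - n)) by lia.
    rewrite <- pascal by lia. ring.
  - assert (n = S j) by lia. subst n. rewrite !Nat.sub_diag. rewrite !binom_0. ring.
  - ring.
Qed.

Lemma kraw_term_j0 N k r n : kraw_term (S N) k 0 r n = kraw_term N k 0 r n.
Proof.
  unfold kraw_term. destruct (Nat.leb_spec n 0). assert (n = 0%nat) by lia. subst. rewrite !binom_0. ring. ring.
Qed.

Lemma kraw_term_top N k r n : (n <= k)%nat -> (k <= N)%nat -> kraw_term (S N) k (S N) r n = kraw_term N k N r n.
Proof.
  intros H1 H2. unfold kraw_term. destruct (Nat.leb_spec n (S N)); destruct (Nat.leb_spec n N); try lia.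
  rewrite !binom_diag. ring.
Qed.

Lemma kraw_terms_diag N j r : (j <= N)%nat -> Rsum (S N) (kraw_term N N j r) = C N j * (1 - r) ^ j.
Proof.
  intro Hj. replace (S N) with (S j + (N - j))%nat by lia. rewrite <- Rsum_extend.
  2:{ intros n Hn. unfold kraw_term. destruct (Nat.leb_spec n j); [lia | reflexivity]. }
  replace (1 - r) with (- r + 1) by ring. rewrite binomial, <- Rsum_sum_f, <- Rsum_scal.
  apply Rsum_ext. intros n Hn. unfold kraw_term. destruct (Nat.leb_spec n j); [|lia].
  replace ((-1) ^ n * C N n * C (N - n) (j - n) * r ^ n) with ((-1) ^ n * (C N n * C (N - n) (j - n)) * r ^ n) by ring.
  rewrite binom_subset_of_subset by lia. rewrite pow1. replace (- r) with (-1 * r) by ring. rewrite Rpow_mult_distr. ring.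
Qed.

Definition gpoly_kraw_form (N k j : nat) (z : Cplx) : Cplx :=
  Cmul (Cpow (Copp (Cconj z)) k) (Cmul (Cpow z j) (RtoC (Rsum (S k) (kraw_term N k j (/ pval z))))).

(* (-conj z) z (1 - 1/p) = 1, which turns (1 - r)^j into (-conj z)^(-j) z^(-j). *)
Lemma conj_inv_p_identity z : z <> Czero -> Cmul (Copp (Cconj z)) (Cmul z (RtoC (1 - / pval z))) = Cone.
Proof.
  intro H. pose proof (Cnorm2_pos z H).
  transitivity (Cmul (RtoC (- Cnorm2 z)) (RtoC (1 - / pval z))).
  { rewrite RtoC_opp, <- Cmul_conj_norm2. ring. }
  rewrite <- RtoC_mul, <- RtoC_1. f_equal. unfold pval. field. lra.
Qed.

Lemma gpoly_diag_kraw_form z N j : z <> Czero -> (j <= N)%nat -> gpoly N N z j = gpoly_kraw_form N N j z.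
Proof.
  intros Hz Hj. unfold gpoly. rewrite Nat.sub_diag, pq_poly_pure_Q by auto.
  unfold gpoly_kraw_form. rewrite kraw_terms_diag by auto. rewrite RtoC_mul, RtoC_pow.
  assert (EN : Cpow (Copp (Cconj z)) N = Cmul (Cpow (Copp (Cconj z)) (N - j)) (Cpow (Copp (Cconj z)) j))
    by (rewrite <- Cpow_add; f_equal; lia).
  rewrite EN.
  transitivity (Cmul (Cmul (RtoC (C N j)) (Cpow (Copp (Cconj z)) (N - j)))
    (Cpow (Cmul (Copp (Cconj z)) (Cmul z (RtoC (1 - / pval z)))) j)).
  { rewrite conj_inv_p_identity, Cpow_one by auto. ring. }
  rewrite !Cpow_mul. ring.
Qed.

(* The coefficients of g_k have the Krawtchouk form, by induction on N through g = P g. *)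
Lemma gpoly_eq_kraw_form z : z <> Czero -> forall N k j, (k <= N)%nat -> (j <= N)%nat -> gpoly N k z j = gpoly_kraw_form N k j z.
Proof.
  intro Hz. induction N; intros k j Hk Hj.
  - assert (k = 0%nat) by lia. subst. apply gpoly_diag_kraw_form; auto.
  - destruct (Nat.eq_dec k (S N)) as [->|Hk'].
    + apply gpoly_diag_kraw_form; auto.
    + rewrite gpoly_succ_N by lia. unfold mulP, mul_lin. unfold gpoly_kraw_form. destruct j as [|j].
      * rewrite IHN by lia. unfold gpoly_kraw_form.
        rewrite (Rsum_ext _ (kraw_term (S N) k 0 (/ pval z)) (kraw_term N k 0 (/ pval z))) by (intros; apply kraw_term_j0). ring.
      * destruct (Nat.eq_dec j N) as [->|Hne].
        -- rewrite IHN by lia. rewrite gpoly_top_zero by lia. unfold gpoly_kraw_form.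
           rewrite (Rsum_ext _ (kraw_term (S N) k (S N) (/ pval z)) (kraw_term N k N (/ pval z))) by (intros; apply kraw_term_top; lia).
           simpl Cpow. ring.
        -- rewrite !IHN by lia. unfold gpoly_kraw_form.
           rewrite (Rsum_ext _ (kraw_term (S N) k (S j) (/ pval z)) (fun n => kraw_term N k (S j) (/ pval z) n + kraw_term N k j (/ pval z) n))
             by (intros; apply kraw_term_pascal; lia).
           rewrite Rsum_add, RtoC_add. simpl Cpow. ring.
Qed.

Lemma pval_neq0 z : z <> Czero -> pval z <> 0.
Proof. intro H. pose proof (Cnorm2_pos z H). unfold pval. apply Rgt_not_eq. apply Rdiv_lt_0_compat; lra. Qed.

Lemma gpoly_kraw N k j z : z <> Czero -> (k <= N)%nat -> (j <= N)%nat ->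
  gpoly N k z j = Cmul (Cpow (Copp (Cconj z)) k) (Cmul (Cpow z j) (RtoC (C N j * kraw j k (pval z) N))).
Proof.
  intros Hz Hk Hj. rewrite gpoly_eq_kraw_form by auto. unfold gpoly_kraw_form. rewrite binom_kraw_expand by (auto; apply pval_neq0; auto). reflexivity.
Qed.

Lemma veronese_entry N k j z : (k <= N)%nat -> (j <= N)%nat -> z <> Czero ->
  veronese N k z j =
    Cmul (RtoC (INR (fact N) / INR (fact (N - k))))
      (Cmul (Cpow (Cdiv (Copp (Cconj z)) (Cadd Cone (Cmul z (Cconj z)))) k)
        (Cmul (RtoC (sqrt (C N j))) (Cmul (Cpow z j) (RtoC (kraw j k (pval z) N))))).
Proof.
  intros Hk Hj Hz.
  rewrite veronese_fvec by auto. unfold fvec. rewrite gpoly_kraw by auto.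
  unfold Cdiv. rewrite one_plus_Cnorm2, Cpow_mul. unfold hfac. rewrite RtoC_inv.
  pose proof (sqrt_binom_pos N j Hj) as Hs.
  assert (Hs' : RtoC (sqrt (C N j)) <> Czero) by (apply RtoC_neq; lra).
  rewrite <- (sqrt_binom_sq N j Hj) at 2.
  fold (ffact N k). unfold Rdiv. rewrite !RtoC_mul, RtoC_inv.
  field. auto.
Qed.

Lemma veronese_projector_entry N k i j z :
  (k <= N)%nat -> (i <= N)%nat -> (j <= N)%nat -> z <> Czero ->
  proj N (veronese N k z) i j =
    Cmul (RtoC (C N k))
      (Cmul (Cdiv (Cpow (Cmul z (Cconj z)) k) (Cpow (Cadd Cone (Cmul z (Cconj z))) N))
        (Cmul (Cmul (Cpow z i) (Cpow (Cconj z) j))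
          (Cmul (RtoC (sqrt (C N i * C N j)))
            (RtoC (kraw i k (pval z) N * kraw j k (pval z) N))))).
Proof.
  intros Hk Hi Hj Hz.
  pose proof (Cnorm2_pos z Hz) as Hu.
  rewrite (proj_ext N _ (fvec N k z)) by (auto; intros; apply veronese_fvec; auto).
  unfold proj. rewrite dotc_fvec_self by auto.
  unfold fvec. rewrite !gpoly_kraw by auto.
  rewrite !Cconj_mul, !Cconj_RtoC, hfac_pow_conj, Cconj_pow, Cconj_opp, Cconj_conj, Cconj_pow.
  rewrite one_plus_Cnorm2.
  replace (Cmul z (Cconj z)) with (Cmul (Copp (Cconj z)) (Copp z)) by ring.
  rewrite Cpow_mul. unfold fvec_norm2, hfac. rewrite <- !RtoC_pow.
  rewrite sqrt_mult by (left; apply binom_pos; auto).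
  rewrite !RtoC_mul, !RtoC_div.
  assert (Ei : RtoC (C N i) = Cmul (RtoC (sqrt (C N i))) (RtoC (sqrt (C N i))))
    by (rewrite <- RtoC_mul, sqrt_binom_sq; auto).
  assert (Ej : RtoC (C N j) = Cmul (RtoC (sqrt (C N j))) (RtoC (sqrt (C N j))))
    by (rewrite <- RtoC_mul, sqrt_binom_sq; auto).
  rewrite Ei, Ej.
  pose proof (sqrt_binom_pos N i Hi). pose proof (sqrt_binom_pos N j Hj).
  assert (Hnorm : RtoC (1 + Cnorm2 z) <> Czero) by (apply RtoC_neq; lra).
  assert (Hsi : RtoC (sqrt (C N i)) <> Czero) by (apply RtoC_neq; lra).
  assert (Hsj : RtoC (sqrt (C N j)) <> Czero) by (apply RtoC_neq; lra).
  assert (Hpow : RtoC ((/ (1 + Cnorm2 z)) ^ k) <> Czero).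
  { apply RtoC_neq, pow_nonzero, Rinv_neq_0_compat. lra. }
  assert (HpowN : RtoC ((1 + Cnorm2 z) ^ N) <> Czero) by (apply RtoC_neq, pow_nonzero; lra).
  assert (Hbin : RtoC (C N k) <> Czero) by (apply RtoC_neq, Rgt_not_eq, binom_pos; auto).
  assert (Hff : RtoC (ffact N k) <> Czero) by (apply RtoC_neq, Rgt_not_eq, ffact_pos).
  field. repeat split; auto.
Qed.

Theorem theorem3p1 (N : nat) (HN : (0 < N)%nat) :
  forall (k j : nat) (xi : Cplx), (k <= N)%nat -> (j <= N)%nat -> xi <> Czero ->
    veronese N k xi j =
      Cmul (RtoC (INR (fact N) / INR (fact (N - k))))
        (Cmul (Cpow (Cdiv (Copp (Cconj xi)) (Cadd Cone (Cmul xi (Cconj xi)))) k)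
          (Cmul (RtoC (sqrt (C N j)))
            (Cmul (Cpow xi j) (RtoC (kraw j k (pval xi) N)))))
  /\ forall i : nat, (i <= N)%nat ->
    proj N (veronese N k xi) i j =
      Cmul (RtoC (C N k))
        (Cmul (Cdiv (Cpow (Cmul xi (Cconj xi)) k) (Cpow (Cadd Cone (Cmul xi (Cconj xi))) N))
          (Cmul (Cmul (Cpow xi i) (Cpow (Cconj xi) j))
            (Cmul (RtoC (sqrt (C N i * C N j)))
              (RtoC (kraw i k (pval xi) N * kraw j k (pval xi) N))))).
Proof.
  intros k j xi Hk Hj Hxi. split.
  - exact (veronese_entry N k j xi Hk Hj Hxi).
  - intros i Hi. exact (veronese_projector_entry N k i j xi Hk Hi Hj Hxi).
Qed.
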